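(* Let $t$ be a positive even integer. Then $$\sum_{n\geq1} a_t^{\star}(n)\, q^n=t \cdot \frac{q^{2t}\, (-q;q^2)_{\infty}}{1-q^{2t}},$$ and consequently, for every integer $n\ge 1$, $$a_t^{\star}(n)=t\sum_{j\geq 1} sc(n-2tj)=t\sum_{j\geq 1} q^{\star}(n-2tj).$$
   Context: A partition $\lambda=(\lambda_1\ge\dots\ge\lambda_\ell\ge 1)$ of $n$ has $\sum_i\lambda_i=n$; its Young diagram has $\lambda_i$ left-justified cells in row $i$. The conjugate $\lambda'$ is obtained by reflecting the Young diagram in the main diagonal; $\lambda$ is self-conjugate if $\lambda=\lambda'$, and $\mathcal{SC}$ is the set of self-conjugate partitions. The hook length of the cell $(i,j)$ is the number of cells to its right in row $i$ plus the number below it in column $j$ plus $1$; $n_t(\lambda)$ is the number of cells of $\lambda$ with hook length $t$. Define $a_t^{\star}(n)=\sum_{\lambda\in\mathcal{SC},\,\lambda\vdash n} n_t(\lambda)$. $sc(m)$ is the number of self-conjugate partitions of $m$, $q^{\star}(m)$ is the number of partitions of $m$ into distinct odd parts, with $sc(0)=q^\star(0)=1$ and $sc(m)=q^\star(m)=0$ for $m<0$. $(a;q)_\infty=\prod_{j\ge0}(1-aq^j)$. *)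

From HB Require Import structures.
From mathcomp Require Import all_boot all_order all_algebra.
Set Implicit Arguments. Unset Strict Implicit. Unset Printing Implicit Defensive.
Import Order.TTheory GRing.Theory Num.Theory.

Definition is_partition (s : seq nat) : bool :=
  sorted geq s && all (fun x => 0 < x) s.

Definition pseq (n : nat) (f : {ffun 'I_n -> 'I_n.+1}) : seq nat :=
  [seq (val (f i) : nat) | i <- enum 'I_n & 0 < val (f i)].

(* The duplicate-free list of all partitions of n: every partition of n has
   at most n parts, each at most n, so all of them occur among the pseq f. *)
Definition partitions (n : nat) : seq (seq nat) :=
  undup [seq s <- [seq pseq f | f <- enum {ffun 'I_n -> 'I_n.+1}]
           | is_partition s && (sumn s == n)].

Definition conj_part (s : seq nat) : seq nat :=
  [seq count (fun x => j < x) s | j <- iota 0 (head 0 s)].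

Definition self_conjugate (s : seq nat) : bool := conj_part s == s.

(* Hook length of the cell in row i.+1, column j.+1 (0-indexed i, j):
   arm + leg + 1. *)
Definition hook (s : seq nat) (i j : nat) : nat :=
  (nth 0 s i - j.+1) + (nth 0 (conj_part s) j - i.+1) + 1.

Definition n_hook (t : nat) (s : seq nat) : nat :=
  \sum_(i < size s) \sum_(j < nth 0 s i) (hook s i j == t).

Definition a_star (t n : nat) : nat :=
  \sum_(s <- partitions n | self_conjugate s) n_hook t s.

Definition sc_nat (m : nat) : nat := count self_conjugate (partitions m).
Definition qstar_nat (m : nat) : nat :=
  count (fun s => sorted (fun a b => b < a) s && all odd s) (partitions m).

Definition sc (m : int) : nat := if m is Posz k then sc_nat k else 0.
Definition qstar (m : int) : nat := if m is Posz k then qstar_nat k else 0.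

Local Open Scope ring_scope.

Definition a_star_poly (t N : nat) : {poly int} :=
  \sum_(1 <= n < N.+1) (a_star t n)%:Z *: 'X^n.

(* prod_{0 <= j < N} (1 + q^(2j+1)), agreeing with (-q;q^2)_infty mod q^(N+1) *)
Definition odd_prod_poly (N : nat) : {poly int} :=
  \prod_(j < N) (1 + 'X^(2 * j + 1)).

From mathcomp Require Import all_boot all_order all_algebra.
From mathcomp Require Import zify ring.
Set Implicit Arguments. Unset Strict Implicit. Unset Printing Implicit Defensive.
Import GRing.Theory Num.Theory.

(* A self-conjugate partition is determined by its diagonal hooks: it is
   [frob D] for the strictly decreasing list D of their arms, and its size is
   the sum of the odd numbers 2a+1 (a in D), which also matches self-conjugate
   partitions with partitions into distinct odd parts.  Wrapping an outer
   diagonal hook of arm a around [frob D] creates, for even t,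
   [2 * hook_gain t a D] new hooks of length t.  Summed over all subsets D of
   {0, ..., N-1}, this gives a linear recursion in N for the generating
   polynomial of n_t over self-conjugate partitions, and induction on N (first
   up to N = t, then beyond) yields
     (1 - q^(2t)) * sum_D n_t(frob D) q^|frob D| = t q^(2t) prod_(j<N) (1 + q^(2j+1))
   up to terms of degree > N.  Comparing coefficients gives
   a_t^star(n) = a_t^star(n - 2t) + t sc(n - 2t), which unrolls to the sum. *)

(** * Partitions and conjugation *)

Lemma mem_partitions n s :
  (s \in partitions n) = is_partition s && (sumn s == n).
Proof.
rewrite /partitions mem_undup mem_filter andbC.
have [/andP [/andP [_ s_pos] /eqP s_sum] | _] := boolP (is_partition s && _); last by rewrite andbF.
have le_n x : x \in s -> (x <= n)%N.
  by move=> xs; rewrite -s_sum; elim: {s_pos s_sum} s xs => //= y s IH;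
     rewrite inE => /orP [/eqP -> | /IH]; lia.
have size_le : (size s <= n)%N.
  by rewrite -s_sum; elim: {s_sum le_n} s s_pos => //= y s IH /andP [y_pos /IH]; lia.
rewrite andbT; apply/mapP; exists [ffun i : 'I_n => inord (nth 0 s i)]; first by rewrite mem_enum.
have -> : pseq [ffun i : 'I_n => inord (nth 0 s i)]
          = [seq x <- mkseq (nth 0 s) n | 0 < x].
  rewrite /pseq -filter_map /mkseq -val_enum_ord -map_comp.
  congr filter; apply: eq_map => i /=; rewrite ffunE inordK // ltnS.
  by case: (ltnP i (size s)) => [/(mem_nth 0)/le_n | /(nth_default 0) ->].
rewrite -(subnKC size_le) /mkseq iotaD map_cat filter_cat -/(mkseq _ _) mkseq_nth.
rewrite (all_filterP s_pos) -[LHS]cats0; congr cat; apply/esym/eqP.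
rewrite -[_ == _]negbK -has_filter; apply/hasPn => x /mapP [i].
by rewrite mem_iota => /andP [le_si _] ->; rewrite nth_default.
Qed.

Lemma uniq_partitions n : uniq (partitions n).
Proof. exact: undup_uniq. Qed.

Lemma sorted_geq_nth (s : seq nat) i j :
  sorted geq s -> (i <= j)%N -> (nth 0 s j <= nth 0 s i)%N.
Proof.
move=> s_sorted le_ij; have [lt_js | ge_js] := ltnP j (size s); last by rewrite nth_default.
have geq_trans : transitive geq by move=> x y z /=; lia.
by apply: (sorted_leq_nth geq_trans leqnn) => //; rewrite inE; lia.
Qed.

Lemma sorted_geq_head (s : seq nat) x : sorted geq s -> x \in s -> (x <= head 0 s)%N.
Proof. by rewrite -nth0 => s_sorted /(nthP 0) [i _ <-]; apply: sorted_geq_nth. Qed.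

Lemma nth_filter_pos (s : seq nat) k :
  sorted geq s -> nth 0 [seq x <- s | 0 < x] k = nth 0 s k.
Proof.
elim: s k => [|x s IH] k //= x_s.
have s_sorted : sorted geq s := path_sorted x_s.
case: x x_s => [|x] x_s /=; last by case: k => //= k; apply: IH.
have s0 y : y \in s -> y = 0.
  by move=> ys; have := @sorted_geq_head (0 :: s) y x_s; rewrite inE ys orbT /=; lia.
have -> : [seq y <- s | 0 < y] = [::].
  by apply/eqP; rewrite -[_ == _]negbK -has_filter; apply/hasPn => y /s0 ->.
case: k => [|k] //=.
by have [/(mem_nth 0)/s0 -> | /(nth_default 0) ->] := ltnP k (size s).
Qed.

Lemma mkseq_nth_pad (s : seq nat) n :
  (size s <= n)%N -> mkseq (nth 0 s) n = s ++ nseq (n - size s) 0.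
Proof.
move=> le_sn; apply: (@eq_from_nth _ 0); first by rewrite size_mkseq size_cat size_nseq; lia.
move=> i; rewrite size_mkseq => lt_in; rewrite nth_mkseq // nth_cat nth_nseq.
by case: ltnP => // le_si; rewrite nth_default //; case: ifP.
Qed.

Lemma conj_part_nth (s : seq nat) k :
  sorted geq s -> nth 0 (conj_part s) k = count (fun x => k < x) s.
Proof.
move=> s_sorted; rewrite /conj_part.
have [lt_k | ge_k] := ltnP k (head 0 s); first by rewrite (nth_map 0) ?nth_iota ?size_iota.
rewrite nth_default ?size_map ?size_iota //; apply/esym/eqP.
rewrite -leqn0 leqNgt -has_count; apply/hasPn => x /(sorted_geq_head s_sorted); lia.
Qed.

Lemma size_conj_part s : size (conj_part s) = head 0 s.
Proof. by rewrite size_map size_iota. Qed.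

Lemma conj_part_pos s : all (fun x => 0 < x) (conj_part s).
Proof.
apply/allP => x /mapP [j]; rewrite mem_iota add0n => /andP [_ lt_j] ->.
rewrite -has_count; apply/hasP; exists (head 0 s) => //.
by case: s lt_j => //= y s _; rewrite inE eqxx.
Qed.

Lemma conj_part_part s : is_partition (conj_part s).
Proof.
rewrite /is_partition conj_part_pos andbT; apply/(sortedP 0) => i _.
have [lt_i1 | ge_i1] := ltnP i.+1 (head 0 s); last by rewrite /= nth_default ?size_conj_part.
rewrite !(nth_map 0) ?nth_iota ?size_iota //=; try lia.
by apply: sub_count => x /=; lia.
Qed.

(** * Self-conjugate partitions as Frobenius symbols *)

Definition odd_parts (D : seq nat) : seq nat := [seq 2 * a + 1 | a <- D].

Definition weight (D : seq nat) : nat := sumn (odd_parts D).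

Lemma weight_cons a D : weight (a :: D) = 2 * a + 1 + weight D.
Proof. by []. Qed.

Fixpoint desc_subsets (N : nat) : seq (seq nat) :=
  if N is N'.+1 then desc_subsets N' ++ map (cons N') (desc_subsets N') else [:: [::]].

Lemma mem_desc_subsets N D : (D \in desc_subsets N) = path gtn N D.
Proof.
elim: N D => [|N IH] [|d D] //; first by rewrite mem_cat IH.
rewrite /= mem_cat IH /=.
have -> : (d :: D \in map (cons N) (desc_subsets N)) = (d == N) && path gtn N D.
  apply/mapP/andP => [[D' D'_in [-> ->]] | [/eqP -> D_path]]; first by rewrite -IH.
  by exists D; rewrite ?IH.
case: ltngtP => [lt_dN | lt_Nd | ->] /=; last by rewrite ltnSn.
  by rewrite orbF ltnS ltnW.
by rewrite ltnS leqNgt lt_Nd.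
Qed.

Lemma uniq_desc_subsets N : uniq (desc_subsets N).
Proof.
elim: N => [|N IH] //=; rewrite cat_uniq IH map_inj_uniq ?IH ?andbT; last by move=> ? ? [].
by apply/hasPn => _ /mapP [D _ ->]; rewrite mem_desc_subsets /= ltnn.
Qed.

Lemma weight_ge_mem m D : m \in D -> (2 * m + 1 <= weight D)%N.
Proof. by elim: D => //= d D IH; rewrite inE weight_cons => /orP [/eqP -> | /IH]; lia. Qed.

Lemma path_gtn_weight a D : sorted gtn D -> (weight D <= a)%N -> path gtn a D.
Proof.
move=> D_sorted le_wa; rewrite (path_sortedE (rev_trans ltn_trans)) D_sorted andbT.
by apply/allP => d /weight_ge_mem /= le_d; lia.
Qed.

(* [wrap_hook a mu] puts a diagonal hook with arm and leg [a] around [mu],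
   which is shifted one cell down and right; hence [frob D] is the
   self-conjugate partition with Frobenius symbol (D | D). *)
Definition wrap_hook (a : nat) (mu : seq nat) : seq nat :=
  a.+1 :: mkseq (fun k => (nth 0 mu k).+1) a.

Definition unwrap_hook (s : seq nat) : seq nat :=
  [seq y <- [seq y.-1 | y <- behead s] | 0 < y].

Fixpoint frob (D : seq nat) : seq nat :=
  if D is a :: D' then wrap_hook a (frob D') else [::].

Lemma size_wrap_hook a mu : size (wrap_hook a mu) = a.+1.
Proof. by rewrite /= size_mkseq. Qed.

Lemma nth_wrap_hook a mu k :
  nth 0 (wrap_hook a mu) k =
  if k is k'.+1 then (if k' < a then (nth 0 mu k').+1 else 0) else a.+1.
Proof.
case: k => [|k] //=; case: ltnP => [lt_ka | ge_ka]; first by rewrite nth_mkseq.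
by rewrite nth_default ?size_mkseq.
Qed.

Lemma wrap_hookE a mu : (size mu <= a)%N ->
  wrap_hook a mu = a.+1 :: map succn (mu ++ nseq (a - size mu) 0).
Proof. by move=> le_mua; rewrite -mkseq_nth_pad // /mkseq -map_comp. Qed.

Lemma wrap_hookK a mu : is_partition mu -> (size mu <= a)%N ->
  unwrap_hook (wrap_hook a mu) = mu.
Proof.
move=> /andP [_ mu_pos] le_mua; rewrite /unwrap_hook wrap_hookE //= -map_comp map_id.
by rewrite filter_cat (all_filterP mu_pos) -[RHS]cats0; congr cat; elim: (a - size mu).
Qed.

Lemma unwrap_hookK x s : is_partition (x :: s) -> size (x :: s) = x ->
  x :: s = wrap_hook x.-1 (unwrap_hook (x :: s)).
Proof.
move=> /andP [s_sorted s_pos] /= size_s.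
have tail_sorted : sorted geq s := path_sorted s_sorted.
have x_pos : (0 < x)%N by case/andP: s_pos.
rewrite /wrap_hook prednK //; congr cons.
apply: (@eq_from_nth _ 0) => [|k lt_ks]; first by rewrite size_mkseq; lia.
have sk_pos : (0 < nth 0 s k)%N by apply: (allP s_pos); rewrite inE mem_nth ?orbT.
rewrite nth_mkseq; last lia.
rewrite /unwrap_hook /= nth_filter_pos ?(nth_map 0) //; first lia.
by move: tail_sorted; apply: homo_sorted => m n /=; lia.
Qed.

Lemma unwrap_hook_part s : is_partition s -> is_partition (unwrap_hook s).
Proof.
case/andP => s_sorted _; rewrite /is_partition filter_all andbT.
have tail_sorted : sorted geq (behead s) by case: s s_sorted => //= x s /path_sorted.
apply: sorted_filter => [? ? ? /=|]; first lia.
by move: tail_sorted; apply: homo_sorted => ? ? /=; lia.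
Qed.

Section WrapHook.

Variables (a : nat) (mu : seq nat).
Hypotheses (mu_sorted : sorted geq mu) (size_mu : (size mu <= a)%N).

Lemma sorted_wrap_hook : (head 0 mu <= a)%N -> sorted geq (wrap_hook a mu).
Proof.
move=> head_mu; apply/(sortedP 0) => i _; rewrite !nth_wrap_hook -nth0 in head_mu *.
case: i => [|i]; first by case: ifP.
case: ifP => lt_ia; case: ifP => lt_i1a //; last lia.
by have := sorted_geq_nth mu_sorted (leqnSn i); lia.
Qed.

Lemma sumn_wrap_hook : sumn (wrap_hook a mu) = 2 * a + 1 + sumn mu.
Proof.
have sumn_succ s : sumn (map succn s) = size s + sumn s by elim: s => //= x s ->; lia.
by rewrite wrap_hookE //= sumn_succ sumn_cat sumn_nseq size_cat size_nseq; lia.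
Qed.

Lemma conj_wrap_hook : conj_part (wrap_hook a mu) = wrap_hook a (conj_part mu).
Proof.
apply: (@eq_from_nth _ 0); first by rewrite size_conj_part size_wrap_hook.
move=> i; rewrite size_conj_part /= => lt_ia.
rewrite /conj_part (nth_map 0) ?size_iota // nth_iota // nth_wrap_hook.
case: i lt_ia => [_ | k lt_ka]; last rewrite ltnS in lt_ka.
  apply/eqP; rewrite -{1}(size_wrap_hook a mu) -all_count.
  by apply/allP => x /=; rewrite inE => /orP [/eqP -> | /mapP [k _ ->]].
rewrite lt_ka -/(conj_part _) conj_part_nth // /= ltnS lt_ka add1n count_map.
congr succn; rewrite -(count_map (nth 0 mu) (fun x => k < x)) -/(mkseq _ _).
by rewrite mkseq_nth_pad // count_cat count_nseq /= mul0n addn0.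
Qed.

End WrapHook.

Lemma size_frob D : size (frob D) = head 0 (frob D).
Proof. by case: D => [|d D] //=; rewrite size_mkseq. Qed.

Lemma path_gtn_frob a D : path gtn a D = sorted gtn D && (head 0 (frob D) <= a)%N.
Proof. by case: D => [|d D] //=; rewrite andbC. Qed.

Lemma head_frob_le a D : path gtn a D -> (head 0 (frob D) <= a)%N.
Proof. by rewrite path_gtn_frob => /andP []. Qed.

Lemma frob_part D : sorted gtn D -> is_partition (frob D).
Proof.
elim: D => [|a D IH] //= aD.
have /andP [frob_sorted _] := IH (path_sorted aD).
rewrite /is_partition sorted_wrap_hook ?size_frob ?head_frob_le //=.
by apply/allP => _ /mapP [k _ ->].
Qed.

Lemma sumn_frob D : sorted gtn D -> sumn (frob D) = weight D.
Proof.
elim: D => [|a D IH] // aD; have D_sorted : sorted gtn D := path_sorted aD.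
have /andP [frob_sorted _] := frob_part D_sorted.
by rewrite [frob _]/= sumn_wrap_hook ?IH ?size_frob ?head_frob_le.
Qed.

Lemma conj_frob D : sorted gtn D -> conj_part (frob D) = frob D.
Proof.
elim: D => [|a D IH] // aD; have D_sorted : sorted gtn D := path_sorted aD.
have /andP [frob_sorted _] := frob_part D_sorted.
by rewrite [frob _]/= conj_wrap_hook ?IH ?size_frob ?head_frob_le.
Qed.

Lemma frob_inj : {in sorted gtn &, injective frob}.
Proof.
elim=> [|a D IH] [|a' D'] //= aD aD' eq_frob.
have eq_a : a' = a by case: eq_frob.
rewrite eq_a in aD' eq_frob *.
have D_sorted : sorted gtn D := path_sorted aD.
have D'_sorted : sorted gtn D' := path_sorted aD'.
have := congr1 unwrap_hook eq_frob.
rewrite !wrap_hookK ?frob_part ?size_frob ?head_frob_le // => eq_frob_D.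
by congr cons; apply: IH.
Qed.

Lemma frob_surj s : is_partition s -> self_conjugate s ->
  exists2 D, sorted gtn D & s = frob D.
Proof.
have [n] := ubnP (size s); elim: n s => // n IH [_ _ _ | x s' size_s s_part /eqP s_conj].
  by exists [::].
set s := x :: s' in size_s s_part s_conj *.
set a := x.-1; set mu := unwrap_hook s.
have size_s_head : size s = x by rewrite -[in LHS]s_conj size_conj_part.
have s_wrap : s = wrap_hook a mu by apply: unwrap_hookK.
have mu_part : is_partition mu := unwrap_hook_part s_part.
have /andP [mu_sorted _] := mu_part.
have size_mu : (size mu <= a)%N.
  by rewrite size_filter (leq_trans (count_size _ _)) // size_map size_behead size_s_head.
have head_mu : (head 0 mu <= a)%N.
  have le_a y : y \in mu -> (y <= a)%N.
    rewrite mem_filter => /andP [_ /mapP [z /mem_behead z_in ->]].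
    by have := sorted_geq_head (andP s_part).1 z_in; rewrite /a /=; lia.
  rewrite -nth0; have [/(mem_nth 0)/le_a // | ge_mu] := ltnP 0 (size mu).
  by rewrite nth_default.
have mu_conj : conj_part mu = mu.
  have := congr1 unwrap_hook s_conj; rewrite {1}s_wrap conj_wrap_hook //.
  by rewrite !wrap_hookK ?conj_part_part ?size_conj_part // -s_wrap.
have mu_sc : self_conjugate mu by rewrite /self_conjugate mu_conj.
have lt_mu_n : (size mu < n)%N by move: size_s size_mu; rewrite /a -size_s_head /s /=; lia.
have [D D_sorted mu_frob] := IH mu lt_mu_n mu_part mu_sc.
exists (a :: D); last by rewrite s_wrap mu_frob.
by rewrite /= path_gtn_frob D_sorted -mu_frob.
Qed.

Lemma mem_desc_subsets_weight N n D : (n <= N)%N ->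
  (D \in [seq D <- desc_subsets N | weight D == n]) = (weight D == n) && sorted gtn D.
Proof.
move=> le_nN; rewrite mem_filter mem_desc_subsets.
have [/eqP w_D | _] //= := boolP (weight D == n).
apply/idP/idP => [/path_sorted // | D_sorted]; apply: path_gtn_weight; lia.
Qed.

Lemma perm_desc_subsets_weight N M n : (n <= N)%N -> (n <= M)%N ->
  perm_eq [seq D <- desc_subsets N | weight D == n] [seq D <- desc_subsets M | weight D == n].
Proof.
move=> le_nN le_nM; apply: uniq_perm; rewrite ?filter_uniq ?uniq_desc_subsets // => D.
by rewrite !mem_desc_subsets_weight.
Qed.

Lemma perm_self_conjugate_frob n :
  perm_eq [seq s <- partitions n | self_conjugate s]
          [seq frob D | D <- desc_subsets n & weight D == n].
Proof.
apply: uniq_perm; first by rewrite filter_uniq ?uniq_partitions.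
  rewrite map_inj_in_uniq ?filter_uniq ?uniq_desc_subsets // => D D'.
  rewrite !mem_desc_subsets_weight // => /andP [_ D_sorted] /andP [_ D'_sorted].
  exact: frob_inj.
move=> s; rewrite mem_filter mem_partitions; apply/idP/mapP.
  move=> /andP [s_sc /andP [s_part /eqP s_sum]].
  have [D D_sorted s_frob] := frob_surj s_part s_sc.
  by exists D => //; rewrite mem_desc_subsets_weight // D_sorted andbT -sumn_frob -?s_frob ?s_sum.
move=> [D]; rewrite mem_desc_subsets_weight // => /andP [/eqP w_D D_sorted] ->.
by rewrite /self_conjugate conj_frob // eqxx frob_part // sumn_frob // w_D /=.
Qed.

Lemma a_star_frob t n :
  a_star t n = \sum_(D <- desc_subsets n | weight D == n) n_hook t (frob D).
Proof.
by rewrite /a_star -big_filter (perm_big _ (perm_self_conjugate_frob n)) big_map big_filter.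
Qed.

Lemma sc_nat_frob n : sc_nat n = count (fun D => weight D == n) (desc_subsets n).
Proof.
by rewrite /sc_nat -size_filter (perm_size (perm_self_conjugate_frob n)) size_map size_filter.
Qed.

Lemma odd_partsK : cancel odd_parts (map half).
Proof. by elim=> //= a D ->; rewrite addnC mul2n (half_bit_double _ true). Qed.

Lemma odd_parts_half s : all odd s -> odd_parts (map half s) = s.
Proof.
elim: s => //= x s IH /andP [x_odd s_odd]; rewrite IH //.
by congr cons; have := odd_double_half x; rewrite x_odd; lia.
Qed.

Lemma perm_distinct_odd_parts n :
  perm_eq [seq s <- partitions n | sorted (fun a b => b < a) s && all odd s]
          [seq odd_parts D | D <- desc_subsets n & weight D == n].
Proof.
apply: uniq_perm; first by rewrite filter_uniq ?uniq_partitions.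
  by rewrite (map_inj_uniq (can_inj odd_partsK)) filter_uniq ?uniq_desc_subsets.
move=> s; rewrite mem_filter mem_partitions; apply/idP/mapP.
  move=> /andP [/andP [s_sorted s_odd] /andP [_ /eqP s_sum]].
  exists (map half s); last by rewrite odd_parts_half.
  rewrite mem_desc_subsets_weight // /weight odd_parts_half // s_sum eqxx /=.
  apply: (homo_sorted_in _ s_odd s_sorted) => x y x_odd y_odd /=.
  have := odd_double_half x; have := odd_double_half y.
  by rewrite (x_odd : odd x) (y_odd : odd y); lia.
move=> [D]; rewrite mem_desc_subsets_weight // => /andP [/eqP w_D D_sorted] ->.
have odd_sorted : sorted (fun a b => b < a) (odd_parts D).
  by move: D_sorted; apply: homo_sorted => x y /=; lia.
rewrite odd_sorted /is_partition (sub_sorted _ odd_sorted) => [|x y /=]; last lia.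
rewrite -/(weight D) w_D eqxx !andbT.
by apply/andP; split; apply/allP => _ /mapP [a _ ->]; rewrite ?addn1 //= mul2n odd_double.
Qed.

Lemma qstar_nat_sc_nat n : qstar_nat n = sc_nat n.
Proof.
rewrite /qstar_nat sc_nat_frob -size_filter (perm_size (perm_distinct_odd_parts n)).
by rewrite size_map size_filter.
Qed.

(** * Hooks of length t *)

Lemma n_hook_nat t s :
  n_hook t s = \sum_(0 <= i < size s) \sum_(0 <= j < nth 0 s i) (hook s i j == t).
Proof. by rewrite /n_hook big_mkord; apply: eq_bigr => i _; rewrite big_mkord. Qed.

Section HookLengths.

Variables (a : nat) (mu : seq nat).
Hypotheses (mu_sorted : sorted geq mu) (size_mu : (size mu <= a)%N).
Hypothesis head_mu : (head 0 mu <= a)%N.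

Let nth_conj_wrap k :
  nth 0 (conj_part (wrap_hook a mu)) k = nth 0 (wrap_hook a (conj_part mu)) k.
Proof. by rewrite conj_wrap_hook. Qed.

Lemma hook_wrap_hook_corner : hook (wrap_hook a mu) 0 0 = 2 * a + 1.
Proof. by rewrite /hook nth_conj_wrap !nth_wrap_hook; lia. Qed.

Lemma hook_wrap_hook_arm k : (k < a)%N ->
  hook (wrap_hook a mu) 0 k.+1 = nth 0 (conj_part mu) k + (a - k).
Proof. by move=> lt_ka; rewrite /hook nth_conj_wrap !nth_wrap_hook lt_ka; lia. Qed.

Lemma hook_wrap_hook_leg i : (i < a)%N ->
  hook (wrap_hook a mu) i.+1 0 = nth 0 mu i + (a - i).
Proof. by move=> lt_ia; rewrite /hook nth_conj_wrap !nth_wrap_hook lt_ia; lia. Qed.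

Lemma hook_wrap_hook_inner i j : (i < a)%N -> (j < nth 0 mu i)%N ->
  hook (wrap_hook a mu) i.+1 j.+1 = hook mu i j.
Proof.
move=> lt_ia lt_j; have lt_ja : (j < a)%N.
  by apply: leq_trans lt_j _; rewrite (leq_trans (sorted_geq_nth mu_sorted (leq0n i))) ?nth0.
by rewrite /hook nth_conj_wrap !nth_wrap_hook lt_ia lt_ja; lia.
Qed.

Lemma n_hook_wrap_hook t :
  n_hook t (wrap_hook a mu) =
  (2 * a + 1 == t) + \sum_(0 <= k < a) (nth 0 (conj_part mu) k + (a - k) == t)
  + \sum_(0 <= i < a) (nth 0 mu i + (a - i) == t) + n_hook t mu.
Proof.
rewrite !n_hook_nat size_wrap_hook big_nat_recl // (nth_wrap_hook a mu 0).
rewrite big_nat_recl // hook_wrap_hook_corner.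
rewrite -!addnA; congr addn.
have arm : \sum_(0 <= k < a) (hook (wrap_hook a mu) 0 k.+1 == t)
         = \sum_(0 <= k < a) (nth 0 (conj_part mu) k + (a - k) == t).
  by apply: eq_big_nat => k /andP [_ lt_ka]; rewrite hook_wrap_hook_arm.
rewrite arm; congr addn.
have rows : \sum_(0 <= i < a) \sum_(0 <= j < nth 0 (wrap_hook a mu) i.+1)
              (hook (wrap_hook a mu) i.+1 j == t)
          = \sum_(0 <= i < a) ((nth 0 mu i + (a - i) == t)
              + \sum_(0 <= j < nth 0 mu i) (hook mu i j == t)).
  apply: eq_big_nat => i /andP [_ lt_ia]; rewrite nth_wrap_hook lt_ia big_nat_recl //.
  rewrite hook_wrap_hook_leg //; congr addn.
  by apply: eq_big_nat => j /andP [_ lt_j]; rewrite hook_wrap_hook_inner.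
rewrite rows big_split /=; congr addn.
have rows_beyond : \sum_(size mu <= i < a) \sum_(0 <= j < nth 0 mu i) (hook mu i j == t) = 0.
  by rewrite big_nat_cond big1 // => i /andP [/andP [le_mui _] _]; rewrite nth_default // big_geq.
by rewrite (@big_cat_nat _ _ _ (size mu) 0 a) //= rows_beyond addn0.
Qed.

End HookLengths.

Lemma sum_sub_eq m n T : (m <= n)%N ->
  \sum_(m <= k < n) (n - k == T) = (0 < T <= n - m).
Proof.
elim: n m => [|n IH] m le_mn; first by rewrite big_geq //; lia.
have [lt_nm | le_m_n] := ltnP n m; first by rewrite big_geq //; lia.
rewrite big_nat_recl //.
under eq_big_nat => k _ do rewrite subSS.
by rewrite IH //; lia.
Qed.

Lemma count_hooks_frob a D T : path gtn a D ->
  \sum_(0 <= k < a) (nth 0 (frob D) k + (a - k) == T) =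
  ((a < T) && (T - a.+1 \in D)) + ((0 < T <= a) && (a - T \notin D)).
Proof.
elim: D a T => [|d D IH] a T.
  move=> _; under eq_big_nat => k _ do rewrite nth_nil add0n.
  by rewrite sum_sub_eq // subn0 in_nil andbF andbT.
rewrite [path _ _ _]/= => /andP [lt_da dD].
have lt_Dd x : x \in D -> (x < d)%N by move/(allP (order_path_min (rev_trans ltn_trans) dD)).
rewrite big_ltn ?(leq_ltn_trans _ lt_da) // (@big_cat_nat _ _ _ d.+1 1 a) // big_add1.
have arm : \sum_(d.+1 <= k < a) (nth 0 (frob (d :: D)) k + (a - k) == T)
         = \sum_(d.+1 <= k < a) (a - k == T).
  apply: eq_big_nat => -[|k] /andP [lt_dk _] //; rewrite (nth_wrap_hook d (frob D)) ltnNge.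
  by rewrite (_ : (d <= k)%N) //; lia.
have inner : \sum_(0 <= j < d) (nth 0 (frob (d :: D)) j.+1 + (a - j.+1) == T)
           = \sum_(0 <= j < d) (nth 0 (frob D) j + (d - j) == T - (a - d)).
  apply: eq_big_nat => j /andP [_ lt_jd]; rewrite (nth_wrap_hook d (frob D)) lt_jd.
  by apply/eqP/eqP; lia.
rewrite -[nth 0 (frob (d :: D)) 0]/(d.+1) subn0 arm inner IH // sum_sub_eq //= !inE.
have -> : (d < T - (a - d)) = (a < T) by apply/idP/idP; lia.
have -> : T - (a - d) - d.+1 = T - a.+1 by lia.
have -> : (0 < T - (a - d) <= d) && (d - (T - (a - d)) \notin D)
          = (a - d < T <= a) && (a - T \notin D).
  have [range_T | out_T] := boolP (a - d < T <= a).
    have -> : d - (T - (a - d)) = a - T by lia.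
    by have -> : (0 < T - (a - d) <= d) by apply/andP; lia.
  by apply/negbTE/andP => -[]; lia.
have := lt_Dd (T - a.+1); have := lt_Dd (a - T).
by case: (a - T \in D); case: (T - a.+1 \in D) => /=; lia.
Qed.

Definition hook_gain (t a : nat) (D : seq nat) : nat :=
  ((a < t) && (t - a.+1 \in D)) + ((t <= a) && (a - t \notin D)).

Lemma n_hook_frob_cons t a D : ~~ odd t -> (0 < t)%N -> path gtn a D ->
  n_hook t (frob (a :: D)) = n_hook t (frob D) + 2 * hook_gain t a D.
Proof.
move=> t_even t_pos aD; have D_sorted : sorted gtn D := path_sorted aD.
have /andP [frob_sorted _] := frob_part D_sorted.
rewrite [frob _]/= n_hook_wrap_hook ?size_frob ?head_frob_le // conj_frob //.
rewrite count_hooks_frob // /hook_gain t_pos.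
have -> : (2 * a + 1 == t) = false.
  by apply: contraNF t_even => /eqP <-; rewrite addn1 /= mul2n odd_double.
lia.
Qed.

(** * Generating polynomials *)

Local Open Scope ring_scope.

Definition subsets_with_gf (N m : nat) : {poly int} :=
  \sum_(D <- desc_subsets N | m \in D) 'X^(weight D).

Definition hook_gf (t N : nat) : {poly int} :=
  \sum_(D <- desc_subsets N) 'X^(weight D) *+ n_hook t (frob D).

Definition gain_gf (t N : nat) : {poly int} :=
  \sum_(D <- desc_subsets N) 'X^(weight D) *+ hook_gain t N D.

Lemma odd_prod_polyS N : odd_prod_poly N.+1 = (1 + 'X^(2 * N + 1)) * odd_prod_poly N.
Proof. by rewrite /odd_prod_poly big_ord_recr /= [LHS]mulrC. Qed.

Lemma odd_prod_polyE N : odd_prod_poly N = \sum_(D <- desc_subsets N) 'X^(weight D).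
Proof.
elim: N => [|N IH]; first by rewrite /odd_prod_poly big_ord0 big_seq1 expr0.
rewrite odd_prod_polyS IH /= big_cat big_map mulrDl mul1r mulr_sumr; congr (_ + _).
by under [RHS]eq_bigr => D _ do rewrite weight_cons exprD.
Qed.

Lemma subsets_with_gfS N m : m != N ->
  subsets_with_gf N.+1 m = (1 + 'X^(2 * N + 1)) * subsets_with_gf N m.
Proof.
move=> mN; rewrite /subsets_with_gf /= big_cat big_map mulrDl mul1r mulr_sumr; congr (_ + _).
by apply: eq_big => [D|D _]; rewrite ?inE ?(negbTE mN) // weight_cons exprD.
Qed.

Lemma subsets_with_gf_ge N m : (N <= m)%N -> subsets_with_gf N m = 0.
Proof.
move=> le_Nm; rewrite /subsets_with_gf big_seq_cond big_pred0 // => D.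
apply/negbTE/andP => -[]; rewrite mem_desc_subsets.
by move=> /(order_path_min (rev_trans ltn_trans))/allP N_gt /N_gt /=; rewrite ltnNge le_Nm.
Qed.

Lemma subsets_with_gf_last N :
  subsets_with_gf N.+1 N = 'X^(2 * N + 1) * odd_prod_poly N.
Proof.
rewrite odd_prod_polyE /subsets_with_gf /= big_cat -/(subsets_with_gf N N).
rewrite subsets_with_gf_ge // Monoid.mul1m big_map mulr_sumr.
by apply: eq_big => [D|D _]; rewrite ?inE ?eqxx // weight_cons exprD.
Qed.

(* Combinatorially: adding [m] to the subsets that avoid it. *)
Lemma subsets_with_gf_rec N m : (m < N)%N ->
  'X^(2 * m + 1) * (odd_prod_poly N - subsets_with_gf N m) = subsets_with_gf N m.
Proof.
elim: N => [//|N IH] lt_mN; rewrite odd_prod_polyS.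
have [-> | m_neq] := eqVneq m N.
  by rewrite subsets_with_gf_last; ring.
have lt_m_N : (m < N)%N by rewrite ltn_neqAle m_neq -ltnS.
by rewrite subsets_with_gfS // -mulrBr mulrCA IH.
Qed.

Lemma hook_gf0 t : hook_gf t 0 = 0.
Proof. by rewrite /hook_gf big_seq1 /n_hook big_ord0 mulr0n. Qed.

Lemma hook_gfS t N : ~~ odd t -> (0 < t)%N ->
  hook_gf t N.+1 =
  (1 + 'X^(2 * N + 1)) * hook_gf t N + 2%:R * 'X^(2 * N + 1) * gain_gf t N.
Proof.
move=> t_even t_pos; rewrite /hook_gf /gain_gf /= big_cat big_map mulrDl mul1r -addrA.
congr (_ + _); rewrite -!mulrA !mulr_sumr -big_split /=.
apply: eq_big_seq => D; rewrite mem_desc_subsets => ND.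
rewrite n_hook_frob_cons // weight_cons exprD mulrnDr mulrnA -mulr_natl; ring.
Qed.

Lemma gain_gf_lt t N : (N < t)%N -> gain_gf t N = subsets_with_gf N (t - N.+1).
Proof.
move=> lt_Nt; rewrite /gain_gf /subsets_with_gf [RHS]big_mkcond; apply: eq_bigr => D _.
by rewrite /hook_gain lt_Nt leqNgt lt_Nt /= addn0 mulrb.
Qed.

Lemma gain_gf_ge t N : (t <= N)%N ->
  gain_gf t N = odd_prod_poly N - subsets_with_gf N (N - t).
Proof.
move=> le_tN; apply/eqP; rewrite eq_sym subr_eq odd_prod_polyE addrC.
rewrite /gain_gf /subsets_with_gf [X in _ == X + _]big_mkcond -big_split /=; apply/eqP.
apply: eq_bigr => D _; rewrite /hook_gain le_tN ltnNge le_tN /=.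
by case: (N - t \in D)%N; rewrite /= ?mulr0n ?mulr1n ?addr0 ?add0r.
Qed.

Section HookGeneratingFunction.

Variables h t : nat.
Hypotheses (h_pos : (0 < h)%N) (t_half : t = (2 * h)%N).
Let z : {poly int} := 'X^(2 * t).

Let t_even : ~~ odd t. Proof. by rewrite t_half mul2n odd_double. Qed.
Let t_pos : (0 < t)%N. Proof. by rewrite t_half; lia. Qed.

Lemma hook_gf_small N : (N <= t)%N ->
  (1 - z) * hook_gf t N =
  2%:R * z * \sum_(h <= k < N)
               (odd_prod_poly N - subsets_with_gf N k - subsets_with_gf N (t.-1 - k)).
Proof.
elim: N => [|N IH] le_Nt; first by rewrite hook_gf0 big_geq //; ring.
have IH' := IH (ltnW le_Nt).
rewrite hook_gfS // gain_gf_lt // (_ : (t - N.+1)%N = (t.-1 - N)%N); last lia.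
set y : {poly int} := 'X^(2 * N + 1); set m0 := (t.-1 - N)%N.
have Q_scale k : k != N -> subsets_with_gf N.+1 k = (1 + y) * subsets_with_gf N k.
  exact: subsets_with_gfS.
have [lt_Nh | le_hN] := ltnP N h.
  rewrite subsets_with_gf_ge /m0; last lia.
  rewrite !big_geq in IH' *; [ | lia | lia].
  by transitivity ((1 + y) * ((1 - z) * hook_gf t N)); [ring | rewrite IH'; ring].
rewrite big_nat_recr //= odd_prod_polyS -/y subsets_with_gf_last -/y Q_scale; last first.
  by rewrite /m0; apply/eqP; lia.
rewrite -/m0.
have -> : \sum_(h <= k < N)
            ((1 + y) * odd_prod_poly N - subsets_with_gf N.+1 k - subsets_with_gf N.+1 (t.-1 - k))
          = (1 + y) * \sum_(h <= k < N)
            (odd_prod_poly N - subsets_with_gf N k - subsets_with_gf N (t.-1 - k)).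
  rewrite mulr_sumr; apply: eq_big_nat => k /andP [le_hk lt_kN].
  by rewrite !Q_scale; [ring | apply/eqP; lia | apply/eqP; lia].
set w : {poly int} := 'X^(2 * m0 + 1).
have z_eq : z = y * w by rewrite /z /y /w -exprD; congr (_ ^+ _); rewrite /m0; lia.
have Q_rec : w * (odd_prod_poly N - subsets_with_gf N m0) = subsets_with_gf N m0.
  by apply: subsets_with_gf_rec; rewrite /m0; lia.
apply/eqP; rewrite -subr_eq0; apply/eqP.
set F := hook_gf t N in IH' *; set S := \sum_(_ <= _ < _) _ in IH' *.
set P := odd_prod_poly N in Q_rec *; set Q0 := subsets_with_gf N m0 in Q_rec *.
transitivity ((1 + y) * ((1 - z) * F - 2%:R * z * S) + 2%:R * y * (Q0 - w * (P - Q0))).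
  by rewrite z_eq; ring.
by rewrite IH' Q_rec !subrr !mulr0 addr0.
Qed.

Lemma hook_gf_threshold :
  (1 - z) * hook_gf t t =
  t%:R * z * odd_prod_poly t - 2%:R * z * \sum_(0 <= m < t) subsets_with_gf t m.
Proof.
rewrite hook_gf_small // !sumrB sumr_const_nat.
have -> : \sum_(h <= k < t) subsets_with_gf t (t.-1 - k)
          = \sum_(0 <= k < h) subsets_with_gf t k.
  rewrite big_nat_rev /= -{1}[h]add0n big_addn (_ : (t - h = h)%N); last lia.
  by apply: eq_big_nat => k /andP [_ lt_kh]; congr subsets_with_gf; lia.
rewrite [in RHS](@big_cat_nat _ _ _ h 0 t) /=; [|lia|lia].
rewrite (_ : (t - h = h)%N); last lia.
by rewrite [in t%:R]t_half natrM; ring.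
Qed.

(* The subtracted sum has no coefficient of degree at most [N]. *)
Lemma hook_gf_large N : (t <= N)%N ->
  (1 - z) * hook_gf t N =
  t%:R * z * odd_prod_poly N - 2%:R * z * \sum_(N - t <= m < N) subsets_with_gf N m.
Proof.
elim: N => [|N IH] le_tN; first lia.
have [le_t_N | gt_tN] := leqP t N.
  2: by rewrite (_ : N.+1 = t) ?subnn ?hook_gf_threshold //; lia.
have IH' := IH le_t_N.
rewrite hook_gfS // gain_gf_ge //.
set y : {poly int} := 'X^(2 * N + 1); set m0 := (N - t)%N.
have lt_m0N : (m0 < N)%N by rewrite /m0; lia.
rewrite (@big_ltn _ _ _ m0 N) // (_ : m0.+1 = N.+1 - t)%N in IH'; last by rewrite /m0; lia.
rewrite big_nat_recr /=; last lia.
rewrite subsets_with_gf_last odd_prod_polyS -/y.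
have -> : \sum_(N.+1 - t <= m < N) subsets_with_gf N.+1 m
          = (1 + y) * \sum_(N.+1 - t <= m < N) subsets_with_gf N m.
  rewrite mulr_sumr; apply: eq_big_nat => m /andP [_ lt_mN].
  by rewrite subsets_with_gfS //; apply/eqP; lia.
set w : {poly int} := 'X^(2 * m0 + 1).
have y_eq : y = z * w by rewrite /z /y /w -exprD; congr (_ ^+ _); rewrite /m0; lia.
have Q_rec : w * (odd_prod_poly N - subsets_with_gf N m0) = subsets_with_gf N m0.
  exact: subsets_with_gf_rec.
apply/eqP; rewrite -subr_eq0; apply/eqP.
set F := hook_gf t N in IH' *; set R := \sum_(_ <= _ < _) _ in IH' *.
set P := odd_prod_poly N in Q_rec *; set Q0 := subsets_with_gf N m0 in Q_rec *.
transitivity ((1 + y) * ((1 - z) * F - (t%:R * z * P - 2%:R * z * (Q0 + R)))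
              + 2%:R * z * (w * (P - Q0) - Q0)).
  by rewrite y_eq; ring.
by rewrite IH' Q_rec !subrr !mulr0 addr0.
Qed.

End HookGeneratingFunction.

Lemma coef_subsets_with_gf N m i : (i < 2 * m + 1)%N -> (subsets_with_gf N m)`_i = 0.
Proof.
move=> lt_i; rewrite /subsets_with_gf coef_sum big1_seq // => D /andP [m_in _].
by rewrite coefXn; case: eqP => // i_eq; have := weight_ge_mem m_in; lia.
Qed.

Lemma coef_hook_gf t N i : (i <= N)%N -> (hook_gf t N)`_i = (a_star t i)%:R.
Proof.
move=> le_iN; rewrite a_star_frob -big_filter.
rewrite -(perm_big _ (perm_desc_subsets_weight le_iN (leqnn i))) big_filter.
rewrite /hook_gf coef_sum natr_sum [RHS]big_mkcond /=; apply: eq_bigr => D _.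
by rewrite coefMn coefXn eq_sym; case: eqP; rewrite ?mulr1n ?mul0rn.
Qed.

Lemma coef_odd_prod_poly N i : (i <= N)%N -> (odd_prod_poly N)`_i = (sc_nat i)%:R.
Proof.
move=> le_iN; rewrite sc_nat_frob -size_filter.
rewrite -(perm_size (perm_desc_subsets_weight le_iN (leqnn i))) size_filter -sum1_count.
rewrite natr_sum [RHS]big_mkcond odd_prod_polyE coef_sum /=.
by apply: eq_bigr => D _; rewrite coefXn eq_sym; case: eqP.
Qed.

Lemma a_star_rec t i : ~~ odd t -> (0 < t)%N ->
  a_star t i =
  if (2 * t <= i)%N then (a_star t (i - 2 * t) + t * sc_nat (i - 2 * t))%N else 0%N.
Proof.
move=> t_even t_pos.
have t_half : t = (2 * t./2)%N by have := odd_double_half t; rewrite (negbTE t_even); lia.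
have h_pos : (0 < t./2)%N by lia.
have := congr1 (fun p : {poly int} => p`_i) (hook_gf_large h_pos t_half (leq_maxr i t)).
rewrite mulrBl mul1r !coefB coefXnM -!mulrA mulr_natl coefMn coefXnM mulr_natl coefMn coefXnM.
rewrite (coef_hook_gf _ (leq_maxl i t)); case: ltnP => [lt_i | le_i].
  by rewrite !mul0rn !subr0 => /eqP; rewrite pnatr_eq0 => /eqP.
rewrite coef_hook_gf ?coef_odd_prod_poly; try lia.
rewrite coef_sum big_nat_cond big1 => [|m /andP [/andP [le_m _] _]]; last first.
  by apply: coef_subsets_with_gf; lia.
by rewrite mul0rn subr0 => /eqP; rewrite subr_eq -mulrnA -natrD eqr_nat => /eqP ->; lia.
Qed.

Lemma a_star0 t : a_star t 0 = 0%N.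
Proof. by rewrite a_star_frob /= big_cons big_nil /= /n_hook big_ord0. Qed.

Lemma coef_a_star_poly t N j :
  (a_star_poly t N)`_j = if (j <= N)%N then (a_star t j)%:R else 0.
Proof.
rewrite /a_star_poly coef_sum.
under eq_bigr => i _ do rewrite coefZ coefXn mulr_natr mulrb eq_sym.
rewrite -big_mkcond big_nat1_eq /=.
case: j => [|j] /=; first by rewrite a_star0.
by rewrite ltnS; case: ifP => // _; rewrite natz.
Qed.

Lemma sc_subz n m : sc (n%:Z - m%:Z) = if (m <= n)%N then sc_nat (n - m) else 0%N.
Proof.
case E: (n%:Z - m%:Z) => [k|k] /=; case: leqP => le_mn //; try lia.
by congr sc_nat; lia.
Qed.

Lemma sum_sc_shift t n : (0 < t)%N ->
  \sum_(1 <= j < n.+1) sc (n%:Z - (2 * t * j)%:Z) =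
  if (2 * t <= n)%N
  then (sc_nat (n - 2 * t)
        + \sum_(1 <= j < (n - 2 * t).+1) sc ((n - 2 * t)%:Z - (2 * t * j)%:Z))%N
  else 0%N.
Proof.
move=> t_pos; case: leqP => [le_n | lt_n]; last first.
  by rewrite big_nat_cond big1 // => j /andP [/andP [j_pos _] _]; rewrite sc_subz ifN //; nia.
rewrite [LHS]big_ltn; last lia.
rewrite sc_subz muln1 le_n; congr addn.
have tail0 : \sum_((n - 2 * t).+1 <= i < n) sc (n%:Z - (2 * t * i.+1)%:Z) = 0%N.
  by rewrite big_nat_cond big1 // => j /andP [/andP [lt_j _] _]; rewrite sc_subz ifN //; nia.
rewrite big_add1 /= (@big_cat_nat _ _ _ (n - 2 * t).+1 1 n) /=; [|lia|lia].
rewrite tail0 Monoid.mulm1; apply: eq_big_nat => j _; rewrite !sc_subz.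
by do 2!case: leqP => ? //; try lia; congr sc_nat; lia.
Qed.

Lemma a_star_sum_sc t n : ~~ odd t -> (0 < t)%N ->
  a_star t n = (t * \sum_(1 <= j < n.+1) sc (n%:Z - (2 * t * j)%:Z))%N.
Proof.
move=> t_even t_pos; elim/ltn_ind: n => n IH.
rewrite a_star_rec // sum_sc_shift //; case: leqP => [le_n | _]; last by rewrite muln0.
by rewrite IH ?mulnDr 1?addnC //; lia.
Qed.

Lemma qstar_sc x : qstar x = sc x.
Proof. by case: x => [k|k] //=; rewrite qstar_nat_sc_nat. Qed.

Theorem theorem1p2 (t : nat) (t_pos : (0 < t)%N) (t_even : ~~ odd t) :
  (forall N : nat,
     take_poly N.+1 ((1 - 'X^(2 * t)) * a_star_poly t N)
     = take_poly N.+1 (t%:R *: ('X^(2 * t) * odd_prod_poly N)))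
  /\
  (forall n : nat, (1 <= n)%N ->
     a_star t n = (t * \sum_(1 <= j < n.+1) sc (n%:Z - (2 * t * j)%:Z))%N
     /\ a_star t n = (t * \sum_(1 <= j < n.+1) qstar (n%:Z - (2 * t * j)%:Z))%N).
Proof.
split=> [N | n _]; last first.
  rewrite a_star_sum_sc //; split=> //; congr muln.
  by apply: eq_bigr => j _; rewrite qstar_sc.
apply/polyP => i; rewrite !coef_take_poly; case: ltnP => // lt_iN; rewrite ltnS in lt_iN.
rewrite mulrBl mul1r coefB coefZ !coefXnM !coef_a_star_poly (a_star_rec i t_even t_pos).
case: ltnP => [lt_i | le_i]; first by rewrite if_same subr0 mulr0.
have le_i2t_N : (i - 2 * t <= N)%N by lia.
by rewrite lt_iN le_i2t_N (coef_odd_prod_poly le_i2t_N) natrD natrM addrC addKr.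
Qed.
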